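(* Let $A=(a_{jk})\in\mathbb C^{4\times 4}$ be a hermitian matrix such that $\bar zAz^T\geq 0$ for all $z\in\mathbb C^4$ with $z_1z_4+z_2z_3=0$. Then $$\sum_{j,k=1}^{4}a_{jk}\,a_{5-j,5-k}\geq 0.$$ *)

From HB Require Import structures.
From mathcomp Require Import all_boot all_order all_algebra.
From mathcomp Require Import complex.
From mathcomp Require Import reals.
Set Implicit Arguments. Unset Strict Implicit. Unset Printing Implicit Defensive.
Import Order.TTheory GRing.Theory Num.Theory.
Local Open Scope ring_scope.

Definition hermitian_mx (C : numClosedFieldType) (n : nat) (A : 'M[C]_n) : Prop :=
  forall j k : 'I_n, A j k = (A k j)^*.

Definition herm_form (C : numClosedFieldType) (n : nat) (A : 'M[C]_n) (z : 'rV[C]_n) : C :=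
  \sum_(j < n) \sum_(k < n) (z 0 j)^* * A j k * z 0 k.

(* Write D A D, where D = diag(1, 1, -1, 1), in the basis sigma_mu (x) sigma_nu of tensor products
   of Pauli matrices (sigma_0 = 1); its coefficients form a real 4x4 matrix M. The vectors z with
   z_1 z_4 + z_2 z_3 = 0 include all D (u (x) v), and z^* A z = X(u) M X(v)^T, where X(u), the Pauli
   coordinates of u u^*, ranges over the whole future light cone. Hence M is a bilinear form that is
   nonnegative on pairs of future null vectors, and the sum in question is 4 times its Minkowski
   norm a^2 - |c|^2 - |r|^2 + |T|^2, where a = M_00, c and r are the mixed column and row and T is the
   spatial block. Evaluating M on (1, +-c/|c|) and (1, +-r/|r|) gives a + s >= |c| + |r| and
   a - s >= | |c| - |r| | with s = c T r^T / (|c| |r|); hence a^2 + s^2 >= |c|^2 + |r|^2, and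
   s^2 <= |T|^2 by Cauchy-Schwarz. *)
From HB Require Import structures.
From mathcomp Require Import all_boot all_order all_algebra.
From mathcomp Require Import complex.
From mathcomp Require Import reals.
From mathcomp Require Import ring lra.
Set Implicit Arguments. Unset Strict Implicit. Unset Printing Implicit Defensive.
Import Order.TTheory GRing.Theory Num.Theory.
Local Open Scope ring_scope.

Lemma sum_ord4 (V : nmodType) (F : 'I_4 -> V) : \sum_(j < 4) F j = F 0 + F 1 + F 2 + F 3.
Proof. by rewrite !big_ord_recr big_ord0 /= add0r; repeat f_equal; apply: val_inj. Qed.

Section MinkowskiSpace.
Variable R : rcfType.
Implicit Types (M : 'M[R]_4) (x y : 'rV[R]_4).

Definition row4 (x0 x1 x2 x3 : R) : 'rV[R]_4 := \row_j [:: x0; x1; x2; x3]`_j.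

Definition future_null x :=
  0 <= x 0 0 /\ x 0 0 ^+ 2 = x 0 1 ^+ 2 + x 0 2 ^+ 2 + x 0 3 ^+ 2.

Definition bilin M x y := \sum_(i < 4) \sum_(j < 4) x 0 i * M i j * y 0 j.

Definition minkowski_sign (i : 'I_4) : R := if i == 0 then 1 else -1.

Definition minkowski_sqnorm M :=
  \sum_(i < 4) \sum_(j < 4) minkowski_sign i * minkowski_sign j * M i j ^+ 2.

Lemma row4E x : x = row4 (x 0 0) (x 0 1) (x 0 2) (x 0 3).
Proof.
apply/rowP => -[[|[|[|[|//]]]] j_lt4]; rewrite !mxE /=; congr (x 0 _); exact: val_inj.
Qed.

Lemma future_null_unit (e u1 u2 u3 : R) :
  e ^+ 2 = 1 -> u1 ^+ 2 + u2 ^+ 2 + u3 ^+ 2 = 1 ->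
  future_null (row4 1 (e * u1) (e * u2) (e * u3)).
Proof.
move=> e2 u_unit; rewrite /future_null !mxE /= ler01.
by rewrite !exprMn -!mulrDr e2 u_unit expr1n mulr1.
Qed.

Lemma cauchy_schwarz3 (x1 x2 x3 y1 y2 y3 : R) :
  (x1 * y1 + x2 * y2 + x3 * y3) ^+ 2 <=
  (x1 ^+ 2 + x2 ^+ 2 + x3 ^+ 2) * (y1 ^+ 2 + y2 ^+ 2 + y3 ^+ 2).
Proof.
(* Lagrange's identity *)
have -> : (x1 ^+ 2 + x2 ^+ 2 + x3 ^+ 2) * (y1 ^+ 2 + y2 ^+ 2 + y3 ^+ 2) =
    (x1 * y1 + x2 * y2 + x3 * y3) ^+ 2 +
    ((x1 * y2 - x2 * y1) ^+ 2 + (x1 * y3 - x3 * y1) ^+ 2 + (x2 * y3 - x3 * y2) ^+ 2).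
  by ring.
by rewrite lerDl !addr_ge0 ?sqr_ge0.
Qed.

(* For c = 0 any unit vector u will do. *)
Lemma polar_decomposition3 (c1 c2 c3 : R) :
  exists n u1 u2 u3, [/\ 0 <= n, n ^+ 2 = c1 ^+ 2 + c2 ^+ 2 + c3 ^+ 2,
    u1 ^+ 2 + u2 ^+ 2 + u3 ^+ 2 = 1 & [/\ c1 = n * u1, c2 = n * u2 & c3 = n * u3]].
Proof.
pose n : R := Num.sqrt (c1 ^+ 2 + c2 ^+ 2 + c3 ^+ 2).
have n_ge0 : 0 <= n := sqrtr_ge0 _.
have n2 : n ^+ 2 = c1 ^+ 2 + c2 ^+ 2 + c3 ^+ 2 by rewrite sqr_sqrtr ?addr_ge0 ?sqr_ge0.
have [n0 | n_neq0] := eqVneq n 0.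
  have [-> -> ->] : [/\ c1 = 0, c2 = 0 & c3 = 0].
    by rewrite n0 expr0n /= in n2; split; nra.
  by exists 0, 1, 0, 0; rewrite !expr0n expr1n /= !addr0 !mul0r.
exists n, (c1 / n), (c2 / n), (c3 / n); split => //.
  by rewrite !expr_div_n -!mulrDl -n2 divff // expf_neq0.
by split; rewrite mulrC divfK.
Qed.

Lemma minkowski_sqnorm_ge0 M :
  (forall x y, future_null x -> future_null y -> 0 <= bilin M x y) ->
  0 <= minkowski_sqnorm M.
Proof.
move=> M_ge0.
have [nc [u1 [u2 [u3 [nc_ge0 nc2 u_unit [c1 c2 c3]]]]]] :=
  polar_decomposition3 (M 1 0) (M 2 0) (M 3 0).
have [nr [w1 [w2 [w3 [nr_ge0 nr2 w_unit [r1 r2 r3]]]]]] :=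
  polar_decomposition3 (M 0 1) (M 0 2) (M 0 3).
pose s := u1 * (M 1 1 * w1 + M 1 2 * w2 + M 1 3 * w3)
        + u2 * (M 2 1 * w1 + M 2 2 * w2 + M 2 3 * w3)
        + u3 * (M 3 1 * w1 + M 3 2 * w2 + M 3 3 * w3).
pose t2 := M 1 1 ^+ 2 + M 1 2 ^+ 2 + M 1 3 ^+ 2 + (M 2 1 ^+ 2 + M 2 2 ^+ 2 + M 2 3 ^+ 2)
         + (M 3 1 ^+ 2 + M 3 2 ^+ 2 + M 3 3 ^+ 2).
have sign_ge0 (e d : R) : e ^+ 2 = 1 -> d ^+ 2 = 1 ->
    0 <= M 0 0 + e * nc + d * nr + e * d * s.
  move=> e2 d2; have := M_ge0 _ _ (future_null_unit e2 u_unit) (future_null_unit d2 w_unit).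
  rewrite /bilin !sum_ord4 !mxE /= c1 c2 c3 r1 r2 r3; congr (0 <= _).
  transitivity (M 0 0 + e * nc * (u1 ^+ 2 + u2 ^+ 2 + u3 ^+ 2) +
                d * nr * (w1 ^+ 2 + w2 ^+ 2 + w3 ^+ 2) + e * d * s); first by rewrite /s; ring.
  by rewrite u_unit w_unit !mulr1.
have s2_le : s ^+ 2 <= t2.
  have := cauchy_schwarz3 u1 u2 u3 (M 1 1 * w1 + M 1 2 * w2 + M 1 3 * w3)
    (M 2 1 * w1 + M 2 2 * w2 + M 2 3 * w3) (M 3 1 * w1 + M 3 2 * w2 + M 3 3 * w3).
  rewrite u_unit mul1r => /le_trans; apply.
  have := cauchy_schwarz3 (M 1 1) (M 1 2) (M 1 3) w1 w2 w3.
  have := cauchy_schwarz3 (M 2 1) (M 2 2) (M 2 3) w1 w2 w3.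
  have := cauchy_schwarz3 (M 3 1) (M 3 2) (M 3 3) w1 w2 w3.
  rewrite w_unit !mulr1 /t2; lra.
have sqrN1 : (-1 : R) ^+ 2 = 1 by rewrite sqrrN expr1n.
have := sign_ge0 (-1) (-1) sqrN1 sqrN1.
have := sign_ge0 (-1) 1 sqrN1 (expr1n _ _).
have := sign_ge0 1 (-1) (expr1n _ _) sqrN1.
have -> : minkowski_sqnorm M = M 0 0 ^+ 2 - nc ^+ 2 - nr ^+ 2 + t2.
  by rewrite /minkowski_sqnorm !sum_ord4 /minkowski_sign /= nc2 nr2 /t2; ring.
nra.
Qed.

End MinkowskiSpace.

Section PauliCoordinates.
Variable R : rcfType.

(* The Pauli coordinates of u u^* for the spinor u = (al, be + i ga); the phase of u is
   normalised so that its first coordinate is real. *)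
Definition spinor_sq (al be ga : R) : 'rV[R]_4 :=
  row4 (al ^+ 2 + be ^+ 2 + ga ^+ 2) (2 * al * be) (2 * al * ga) (al ^+ 2 - be ^+ 2 - ga ^+ 2).

Lemma future_null_spinor_sq x :
  future_null x -> exists al be ga, x = spinor_sq al be ga.
Proof.
rewrite /future_null (row4E x) !mxE /=.
move: (x 0 0) (x 0 1) (x 0 2) (x 0 3) => x0 x1 x2 x3 [x0_ge0 null].
have [p0 | p_neq0] := eqVneq (x0 + x3) 0.
  have [x1_0 x2_0] : x1 = 0 /\ x2 = 0 by split; nra.
  exists 0, (Num.sqrt x0), 0; rewrite /spinor_sq sqr_sqrtr // x1_0 x2_0.
  congr row4; rewrite ?expr0n ?mulr0 ?mul0r /=; lra.
have p_gt0 : 0 < x0 + x3 by rewrite lt_def p_neq0; nra.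
pose al : R := Num.sqrt ((x0 + x3) / 2).
have al2 : al ^+ 2 = (x0 + x3) / 2 by rewrite sqr_sqrtr // divr_ge0 ?ltW.
have al_neq0 : al != 0.
  by apply: contra_neq p_neq0 => al0; move: al2; rewrite al0 expr0n /=; lra.
have two_al_neq0 : 2 * al != 0 by rewrite mulf_neq0 ?pnatr_eq0.
have x12 : x1 ^+ 2 + x2 ^+ 2 = x0 ^+ 2 - x3 ^+ 2 by rewrite null; ring.
exists al, (x1 / (2 * al)), (x2 / (2 * al)); rewrite /spinor_sq.
congr row4; rewrite ?mulrA ?[2 * al * _]mulrC ?mulfK //.
  by rewrite !expr_div_n -addrA -mulrDl x12 exprMn al2; field; lra.
by rewrite !expr_div_n -addrA -opprD -mulrDl x12 exprMn al2; field; lra.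
Qed.

(* u (x) v with its third coordinate negated, for u = (al, be + i ga) and v = (de, ep + i ze). *)
Definition spinor_tensor (al be ga de ep ze : R) : 'rV[R[i]]_4 :=
  let u1 := Complex al 0 in let u2 := Complex be ga in
  let v1 := Complex de 0 in let v2 := Complex ep ze in
  \row_j [:: u1 * v1; u1 * v2; - (u2 * v1); u2 * v2]`_j.

Lemma spinor_tensor_isotropic al be ga de ep ze :
  let z := spinor_tensor al be ga de ep ze in z 0 0 * z 0 3 + z 0 1 * z 0 2 = 0.
Proof. by rewrite /= !mxE /=; ring. Qed.

(* The real coefficients M of D A D = \sum_(mu, nu) M mu nu *: (sigma_mu (x) sigma_nu), where
   D = diag(1, 1, -1, 1), sigma_0 = 1, sigma_1 = [[0, 1], [1, 0]], sigma_2 = [[0, -i], [i, 0]] and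
   sigma_3 = [[1, 0], [0, -1]]; for hermitian A they are M mu nu = tr (D A D (sigma_mu (x) sigma_nu)) / 4. *)
Definition pauli_coords (A : 'M[R[i]]_4) : 'M[R]_4 :=
  let d j := complex.Re (A j j) in
  let p j k := complex.Re (A j k) in let q j k := complex.Im (A j k) in
  \matrix_(mu, nu) nth 0 (nth [::] [::
    [:: (d 0 + d 1 + d 2 + d 3) / 4; (p 0 1 - p 2 3) / 2;
        (q 2 3 - q 0 1) / 2; (d 0 - d 1 + d 2 - d 3) / 4];
    [:: (p 1 3 - p 0 2) / 2; (p 0 3 - p 1 2) / 2;
        - (q 0 3 + q 1 2) / 2; - (p 0 2 + p 1 3) / 2];
    [:: (q 0 2 - q 1 3) / 2; (q 1 2 - q 0 3) / 2;
        - (p 0 3 + p 1 2) / 2; (q 0 2 + q 1 3) / 2];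
    [:: (d 0 + d 1 - d 2 - d 3) / 4; (p 0 1 + p 2 3) / 2;
        - (q 0 1 + q 2 3) / 2; (d 0 - d 1 - d 2 + d 3) / 4]] mu) nu.

Lemma hermitian_diag n (A : 'M[R[i]]_n) j : hermitian_mx A -> exists d : R, A j j = d%:C%C.
Proof. by move/(_ j j); case: (A j j) => a b [] b0; exists a; congr Complex; lra. Qed.

Lemma Re_herm_form_spinor_tensor A al be ga de ep ze : hermitian_mx A ->
  complex.Re (herm_form A (spinor_tensor al be ga de ep ze)) =
  bilin (pauli_coords A) (spinor_sq al be ga) (spinor_sq de ep ze).
Proof.
move=> hA; rewrite /herm_form /bilin !sum_ord4 !mxE /=.
rewrite (hA 1 0) (hA 2 0) (hA 3 0) (hA 2 1) (hA 3 1) (hA 3 2).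
have [d0 ->] := hermitian_diag 0 hA; have [d1 ->] := hermitian_diag 1 hA.
have [d2 ->] := hermitian_diag 2 hA; have [d3 ->] := hermitian_diag 3 hA.
case: (A 0 1) => [p01 q01]; case: (A 0 2) => [p02 q02]; case: (A 0 3) => [p03 q03].
case: (A 1 2) => [p12 q12]; case: (A 1 3) => [p13 q13]; case: (A 2 3) => [p23 q23].
by rewrite /=; simpc; field.
Qed.

Lemma rev_ord4 : [/\ rev_ord (0 : 'I_4) = 3, rev_ord (1 : 'I_4) = 2,
  rev_ord (2 : 'I_4) = 1 & rev_ord (3 : 'I_4) = 0].
Proof. by split; apply: val_inj. Qed.

Lemma sum_rev_entries_pauli A : hermitian_mx A ->
  \sum_(j < 4) \sum_(k < 4) A j k * A (rev_ord j) (rev_ord k) =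
  (4 * minkowski_sqnorm (pauli_coords A))%:C%C.
Proof.
move=> hA; rewrite !sum_ord4; have [-> -> -> ->] := rev_ord4.
rewrite /minkowski_sqnorm !sum_ord4 /minkowski_sign !mxE /=.
rewrite (hA 1 0) (hA 2 0) (hA 3 0) (hA 2 1) (hA 3 1) (hA 3 2).
have [d0 ->] := hermitian_diag 0 hA; have [d1 ->] := hermitian_diag 1 hA.
have [d2 ->] := hermitian_diag 2 hA; have [d3 ->] := hermitian_diag 3 hA.
case: (A 0 1) => [p01 q01]; case: (A 0 2) => [p02 q02]; case: (A 0 3) => [p03 q03].
case: (A 1 2) => [p12 q12]; case: (A 1 3) => [p13 q13]; case: (A 2 3) => [p23 q23].
by rewrite /=; simpc; rewrite -complexr0; congr Complex; [field | ring].
Qed.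

End PauliCoordinates.

Theorem theorem7 (R : realType) (A : 'M[R[i]]_4) :
  hermitian_mx A ->
  (forall z : 'rV[R[i]]_4,
      z 0 0 * z 0 3 + z 0 1 * z 0 2 = 0 -> 0 <= herm_form A z) ->
  0 <= \sum_(j < 4) \sum_(k < 4) A j k * A (rev_ord j) (rev_ord k).
Proof.
move=> hA isotropic_ge0.
have lorentz_ge0 x y : future_null x -> future_null y -> 0 <= bilin (pauli_coords A) x y.
  move=> /future_null_spinor_sq[al [be [ga ->]]] /future_null_spinor_sq[de [ep [ze ->]]].
  rewrite -Re_herm_form_spinor_tensor //.
  have := isotropic_ge0 _ (spinor_tensor_isotropic al be ga de ep ze).
  by rewrite lecE => /andP[].
by rewrite sum_rev_entries_pauli // ler0c mulr_ge0 // minkowski_sqnorm_ge0.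
Qed.
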